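(* There is no even integer $f\ge 12$ and rational number $\delta/\pi$ with $\delta\in(\frac{7\pi}{15}-\frac{4\pi}{3f},\pi)$ such that the angles $\alpha=\beta=2\pi-2\delta$, $\gamma=\frac{2\pi}{5}$, $\epsilon=3\delta-\frac{7\pi}{5}+\frac{4\pi}{f}$ satisfy $$\big[(1-\cos\beta)\sin(\delta-\tfrac12\alpha)-(1-\cos\gamma)\sin(\epsilon-\tfrac12\alpha)\big]\sin\tfrac12(\delta-\epsilon)-\big[1-\cos(\beta-\gamma)\big]\sin\tfrac12\alpha\,\sin\tfrac12(\delta+\epsilon)=0.$$ Hence no $a^4b$-tiling by a rational pentagon has the vertices $\alpha\delta^2$, $\beta\delta^2$, $\gamma^5$.
   Context: The angles are those forced by the vertex equations $\alpha+2\delta=\beta+2\delta=5\gamma=2\pi$ and the angle sum $\alpha+\beta+\gamma+\delta+\epsilon=(3+\frac4f)\pi$. Labelling of an $a^4b$-pentagon: $\alpha$ opposite the $b$-edge, $\beta,\gamma$ adjacent to $\alpha$, $\delta,\epsilon$ the endpoints of the $b$-edge adjacent to $\beta,\gamma$ respectively. *)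

From Stdlib Require Export Reals QArith Qreals Arith.
Open Scope R_scope.

Definition a4b_lhs (alpha beta gamma delta epsilon : R) : R :=
  ((1 - cos beta) * sin (delta - alpha / 2)
     - (1 - cos gamma) * sin (epsilon - alpha / 2)) * sin ((delta - epsilon) / 2)
  - (1 - cos (beta - gamma)) * sin (alpha / 2) * sin ((delta + epsilon) / 2).

From Stdlib Require Import Reals QArith Qreals Arith ZArith Lia Lra.
Open Scope R_scope.

(* Writing delta = a PI and 4 PI / f = b PI, the left-hand side is negative on the
   whole box 16/45 <= a <= 1, 0 <= b <= 1/3 cut by a > 7/15 - b/3.  Negativity is certified
   by branch and bound in outward-rounded fixed-point interval arithmetic (scale
   2^32): sine is enclosed by its alternating Taylor sums after reduction to
   [0, PI/2], PI itself by the sign of these sums just below and just above it, and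
   sine on an interval by its value at the midpoint widened by the Lipschitz bound. *)

(** * Fixed-point interval arithmetic *)

Record itv := Itv { lo : Z; hi : Z }.

Definition scale : Z := 2 ^ 32.
Definition scaleR : R := IZR scale.

Definition encloses (A : itv) (x : R) : Prop :=
  IZR (lo A) <= x * scaleR <= IZR (hi A).

Lemma scaleR_pos : 0 < scaleR.
Proof. now apply IZR_lt. Qed.

Definition div_up (x d : Z) : Z := (- (- x / d))%Z.

Lemma div_round_sound (l h d : Z) (y : R) : (0 < d)%Z -> IZR l <= y <= IZR h ->
  IZR (l / d) <= y / IZR d <= IZR (div_up h d).
Proof.
  intros Hd [Hl Hh].
  assert (D : 0 < IZR d) by now apply IZR_lt.
  assert (Ll := Z.mul_div_le l d Hd).
  assert (Lh := Z.mul_div_le (- h) d Hd).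
  apply IZR_le in Ll, Lh. rewrite mult_IZR in Ll, Lh. rewrite opp_IZR in Lh.
  unfold div_up. rewrite opp_IZR.
  split; apply Rmult_le_reg_l with (IZR d); auto;
    replace (IZR d * (y / IZR d)) with y by (field; lra); lra.
Qed.

Lemma linear_lower (m a b x c : R) : a <= x <= b -> m <= a * c -> m <= b * c -> m <= x * c.
Proof. intros [] ? ?; destruct (Rle_dec 0 c); nra. Qed.

Lemma bilinear_lower (m a b c d x y : R) :
  a <= x <= b -> c <= y <= d ->
  m <= a * c -> m <= a * d -> m <= b * c -> m <= b * d -> m <= x * y.
Proof.
  intros Hx Hy ? ? ? ?. rewrite (Rmult_comm x y).
  apply (linear_lower m c d y x Hy); rewrite Rmult_comm; now apply (linear_lower m a b).
Qed.

Lemma bilinear_upper (M a b c d x y : R) :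
  a <= x <= b -> c <= y <= d ->
  a * c <= M -> a * d <= M -> b * c <= M -> b * d <= M -> x * y <= M.
Proof.
  intros Hx Hy ? ? ? ?.
  enough (- M <= x * - y) by lra.
  apply (bilinear_lower _ a b (- d) (- c)); lra.
Qed.

Section Operations.
Local Open Scope Z_scope.

Definition iadd (A B : itv) : itv := Itv (lo A + lo B) (hi A + hi B).
Definition ineg (A : itv) : itv := Itv (- hi A) (- lo A).
Definition isub (A B : itv) : itv := iadd A (ineg B).
Definition idiv (A : itv) (d : Z) : itv := Itv (lo A / d) (div_up (hi A) d).

(* The exact product interval, at scale [scale ^ 2]. *)
Definition icorners (A B : itv) : itv :=
  let p := lo A * lo B in let q := lo A * hi B in
  let r := hi A * lo B in let s := hi A * hi B in
  Itv (Z.min (Z.min p q) (Z.min r s)) (Z.max (Z.max p q) (Z.max r s)).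

(* [Z.shiftr x 32 = x / scale], but shifting is much faster to evaluate. *)
Definition imul (A B : itv) : itv :=
  let C := icorners A B in Itv (Z.shiftr (lo C) 32) (- Z.shiftr (- hi C) 32).

Definition icst (n d : Z) : itv := idiv (Itv (n * scale) (n * scale)) d.
Definition ione : itv := icst 1 1.
Definition ihalf (A : itv) : itv := imul (icst 1 2) A.

End Operations.

Lemma iadd_sound A B x y : encloses A x -> encloses B y -> encloses (iadd A B) (x + y).
Proof. unfold encloses; simpl; rewrite !plus_IZR; lra. Qed.

Lemma ineg_sound A x : encloses A x -> encloses (ineg A) (- x).
Proof. unfold encloses; simpl; rewrite !opp_IZR; lra. Qed.

Lemma isub_sound A B x y : encloses A x -> encloses B y -> encloses (isub A B) (x - y).
Proof. intros; now apply iadd_sound, ineg_sound. Qed.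

Lemma idiv_sound A d x : (0 < d)%Z -> encloses A x -> encloses (idiv A d) (x / IZR d).
Proof.
  intros Hd HA. unfold encloses; simpl.
  assert (D : 0 < IZR d) by now apply IZR_lt.
  replace (x / IZR d * scaleR) with (x * scaleR / IZR d) by (field; lra).
  now apply div_round_sound.
Qed.

Lemma icorners_sound A B x y : encloses A x -> encloses B y ->
  IZR (lo (icorners A B)) <= x * scaleR * (y * scaleR) <= IZR (hi (icorners A B)).
Proof.
  intros HA HB. unfold icorners; cbn [lo hi].
  set (p := (lo A * lo B)%Z); set (q := (lo A * hi B)%Z).
  set (r := (hi A * lo B)%Z); set (s := (hi A * hi B)%Z).
  set (m := Z.min (Z.min p q) (Z.min r s)); set (M := Z.max (Z.max p q) (Z.max r s)).
  assert (Hm : (m <= p /\ m <= q /\ m <= r /\ m <= s)%Z) by lia.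
  assert (HM : (p <= M /\ q <= M /\ r <= M /\ s <= M)%Z) by lia.
  unfold p, q, r, s in Hm, HM.
  destruct Hm as (? & ? & ? & ?), HM as (? & ? & ? & ?).
  split; [eapply bilinear_lower | eapply bilinear_upper]; try eassumption;
    rewrite <- mult_IZR; now apply IZR_le.
Qed.

Lemma imul_sound A B x y : encloses A x -> encloses B y -> encloses (imul A B) (x * y).
Proof.
  intros HA HB. pose proof scaleR_pos.
  replace (imul A B) with (idiv (icorners A B) scale)
    by (unfold imul, idiv, div_up; now rewrite !Z.shiftr_div_pow2).
  replace (x * y) with (x * scaleR * (y * scaleR) / scaleR / scaleR) by (field; lra).
  apply idiv_sound; [reflexivity|].
  unfold encloses.
  replace (x * scaleR * (y * scaleR) / scaleR * scaleR) with (x * scaleR * (y * scaleR))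
    by (field; lra).
  now apply icorners_sound.
Qed.

Lemma icst_sound n d : (0 < d)%Z -> encloses (icst n d) (IZR n / IZR d).
Proof.
  intro Hd. apply idiv_sound; auto.
  unfold encloses; simpl. rewrite mult_IZR. fold scaleR. lra.
Qed.

Lemma ione_sound : encloses ione 1.
Proof. replace 1 with (IZR 1 / IZR 1) by field. now apply icst_sound. Qed.

Lemma ihalf_sound A x : encloses A x -> encloses (ihalf A) (x / 2).
Proof.
  intro HA. replace (x / 2) with (IZR 1 / IZR 2 * x) by (simpl; field).
  apply imul_sound; auto. now apply icst_sound.
Qed.

Lemma encloses_point z : encloses (Itv z z) (IZR z / scaleR).
Proof.
  pose proof scaleR_pos. unfold encloses; simpl.
  replace (IZR z / scaleR * scaleR) with (IZR z) by (field; lra). lra.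
Qed.

Lemma encloses_unit x : -1 <= x <= 1 -> encloses (Itv (- scale) scale) x.
Proof.
  pose proof scaleR_pos. unfold encloses; cbn [lo hi]. rewrite opp_IZR. fold scaleR. nra.
Qed.

(** * Enclosures of sine and PI *)

Section Taylor.
Local Open Scope Z_scope.

Fixpoint fact_Z (n : nat) : Z :=
  match n with O => 1 | S k => Z.of_nat (S k) * fact_Z k end.

Definition isin_term (i : nat) (P : itv) : itv :=
  let T := idiv P (fact_Z (2 * i + 1)) in
  if Nat.even i then T else ineg T.

(* Returns the partial Taylor sum up to [i = n] together with [Y ^ (2 n + 1)]. *)
Fixpoint isin_sum (Y Y2 : itv) (n : nat) : itv * itv :=
  match n with
  | O => (isin_term 0 Y, Y)
  | S k => let (Sum, P) := isin_sum Y Y2 k in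
           let P' := imul Y2 P in (iadd Sum (isin_term (S k) P'), P')
  end.

(* The alternating Taylor sums of [sin] bracket it on [[0, 4]] ([pre_sin_bound]). *)
Definition isin_taylor (N : nat) (Y : itv) : itv :=
  let Y2 := imul Y Y in
  let (Sum, P) := isin_sum Y Y2 (2 * N + 1) in
  Itv (lo Sum) (hi (iadd Sum (isin_term (S (2 * N + 1)) (imul Y2 P)))).

End Taylor.

Lemma fact_Z_INR n : IZR (fact_Z n) = INR (fact n).
Proof.
  induction n as [|n IH]; [reflexivity|].
  cbn [fact_Z fact]. now rewrite mult_IZR, IH, mult_INR, <- INR_IZR_INZ.
Qed.

Lemma fact_Z_pos n : (0 < fact_Z n)%Z.
Proof. apply lt_IZR. rewrite fact_Z_INR. apply lt_0_INR, lt_O_fact. Qed.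

Lemma pow_neg1_even i : (-1) ^ i = if Nat.even i then 1 else -1.
Proof.
  induction i as [|i IH]; [reflexivity|].
  rewrite Nat.even_succ, <- Nat.negb_even, <- tech_pow_Rmult, IH.
  destruct (Nat.even i); simpl; ring.
Qed.

Lemma isin_term_sound i P y :
  encloses P (y ^ (2 * i + 1)) -> encloses (isin_term i P) (sin_term y i).
Proof.
  intro HP. unfold isin_term, sin_term.
  assert (HT := idiv_sound _ _ _ (fact_Z_pos (2 * i + 1)) HP).
  rewrite fact_Z_INR in HT. rewrite pow_neg1_even.
  set (t := y ^ (2 * i + 1) / INR (fact (2 * i + 1))) in *.
  destruct (Nat.even i).
  - now rewrite Rmult_1_l.
  - replace (-1 * t) with (- t) by ring. now apply ineg_sound.
Qed.

Lemma isin_sum_sound Y Y2 y n : encloses Y y -> encloses Y2 (y ^ 2) ->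
  encloses (fst (isin_sum Y Y2 n)) (sum_f_R0 (sin_term y) n) /\
  encloses (snd (isin_sum Y Y2 n)) (y ^ (2 * n + 1)).
Proof.
  intros HY HY2. induction n as [|n [IHs IHp]].
  - split; [apply isin_term_sound|]; simpl; now rewrite Rmult_1_r.
  - cbn [isin_sum]. destruct (isin_sum Y Y2 n) as [Sum P]. cbn [fst snd] in *.
    assert (HP : encloses (imul Y2 P) (y ^ (2 * S n + 1))).
    { replace (2 * S n + 1)%nat with (2 + (2 * n + 1))%nat by lia.
      rewrite pow_add. now apply imul_sound. }
    split; [|exact HP]. apply iadd_sound; [exact IHs|]. now apply isin_term_sound.
Qed.

Lemma isin_taylor_sound N Y y : 0 <= y <= 4 -> encloses Y y -> encloses (isin_taylor N Y) (sin y).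
Proof.
  intros [Hy0 Hy4] HY. pose proof scaleR_pos.
  assert (HY2 : encloses (imul Y Y) (y ^ 2)) by (simpl; rewrite Rmult_1_r; now apply imul_sound).
  destruct (pre_sin_bound y N Hy0 Hy4) as [L U]. unfold sin_approx in L, U.
  destruct (isin_sum_sound Y (imul Y Y) y (2 * N + 1) HY HY2) as [[Hl _] _].
  destruct (isin_sum_sound Y (imul Y Y) y (2 * (N + 1)) HY HY2) as [[_ Hh] _].
  replace (2 * (N + 1))%nat with (S (2 * N + 1)) in Hh, U by lia.
  unfold encloses, isin_taylor. cbn [isin_sum] in Hh.
  destruct (isin_sum Y (imul Y Y) (2 * N + 1)) as [Sum P]. cbn [lo hi fst snd] in *.
  split; nra.
Qed.

Lemma PI_gt_3 : 3 < PI.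
Proof. pose proof PI2_3_2. lra. Qed.

Lemma PI_lower_of_sin_pos N z : (0 <= z)%Z -> IZR z <= 4 * scaleR ->
  (0 < lo (isin_taylor N (Itv z z)))%Z -> IZR z <= PI * scaleR.
Proof.
  intros Hz0 Hz4 Hsin. pose proof scaleR_pos. pose proof PI_gt_3.
  apply IZR_le in Hz0. apply IZR_lt in Hsin.
  destruct (Rle_or_lt (IZR z) (PI * scaleR)) as [|Hc]; [assumption|exfalso].
  assert (PI < IZR z / scaleR) by (apply Rmult_lt_reg_r with scaleR; field_simplify; lra).
  assert (IZR z / scaleR <= 4) by (apply Rmult_le_reg_r with scaleR; field_simplify; lra).
  assert (sin (IZR z / scaleR) <= 0) by (apply sin_le_0; lra).
  destruct (isin_taylor_sound N _ (IZR z / scaleR) ltac:(lra) (encloses_point z)) as [L _]. nra.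
Qed.

Lemma PI_upper_of_sin_neg N z : (0 <= z)%Z ->
  (hi (isin_taylor N (Itv z z)) < 0)%Z -> PI * scaleR <= IZR z.
Proof.
  intros Hz0 Hsin. pose proof scaleR_pos. pose proof PI_4.
  apply IZR_le in Hz0. apply IZR_lt in Hsin.
  destruct (Rle_or_lt (PI * scaleR) (IZR z)) as [|Hc]; [assumption|exfalso].
  assert (0 <= IZR z / scaleR) by (apply Rmult_le_reg_r with scaleR; field_simplify; lra).
  assert (IZR z / scaleR < PI) by (apply Rmult_lt_reg_r with scaleR; field_simplify; lra).
  assert (0 <= sin (IZR z / scaleR)) by (apply sin_ge_0; lra).
  destruct (isin_taylor_sound N _ (IZR z / scaleR) ltac:(lra) (encloses_point z)) as [_ U]. nra.
Qed.

Definition ipi : itv := Itv 13493037680 13493037730.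

Lemma ipi_sound : encloses ipi PI.
Proof.
  split; [apply (PI_lower_of_sin_pos 10) | apply (PI_upper_of_sin_neg 10)];
    try (unfold scaleR; rewrite <- mult_IZR; apply IZR_le); now vm_compute.
Qed.

Section SinPi.
Local Open Scope Z_scope.

Definition isin_quarter (t : Z) : itv :=
  if (0 <=? t) && (2 * t <=? scale) then isin_taylor 2 (imul ipi (Itv t t))
  else Itv (- scale) scale.

Definition fold_half (t : Z) : Z := if scale <=? 2 * t then scale - t else t.

Definition isinpi_point (t : Z) : itv :=
  let u := t mod (2 * scale) in
  if scale <=? u then ineg (isin_quarter (fold_half (u - scale)))
  else isin_quarter (fold_half u).

(* Evaluate at the midpoint and widen by the Lipschitz bound [PI * radius]. *)
Definition isinpi (A : itv) : itv :=
  let m := (lo A + hi A) / 2 in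
  let S := isinpi_point m in
  let e := div_up (hi ipi * (hi A - m)) scale in
  Itv (lo S - e) (hi S + e).

Definition icospi (A : itv) : itv := isinpi (iadd A (icst 1 2)).

End SinPi.

Lemma isin_quarter_sound t : encloses (isin_quarter t) (sin (PI * (IZR t / scaleR))).
Proof.
  pose proof scaleR_pos. pose proof PI_gt_3. pose proof PI_4.
  unfold isin_quarter.
  destruct ((0 <=? t) && (2 * t <=? scale))%Z eqn:E.
  - apply andb_true_iff in E as [E0 E2]. apply Z.leb_le, IZR_le in E0, E2.
    rewrite mult_IZR in E2. fold scaleR in E2.
    assert (Ht : 0 <= IZR t / scaleR <= 1 / 2).
    { split; apply Rmult_le_reg_r with scaleR; auto; field_simplify; lra. }
    apply isin_taylor_sound; [nra|].
    exact (imul_sound _ _ _ _ ipi_sound (encloses_point t)).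
  - apply encloses_unit, SIN_bound.
Qed.

Lemma fold_half_sound t :
  encloses (isin_quarter (fold_half t)) (sin (PI * (IZR t / scaleR))).
Proof.
  pose proof scaleR_pos. unfold fold_half.
  destruct (scale <=? 2 * t)%Z; [|apply isin_quarter_sound].
  replace (PI * (IZR t / scaleR)) with (PI - PI * (IZR (scale - t) / scaleR))
    by (rewrite minus_IZR; fold scaleR; field; lra).
  rewrite sin_PI_x. apply isin_quarter_sound.
Qed.

Lemma sin_period_Z x k : sin (x + 2 * IZR k * PI) = sin x.
Proof.
  assert (Hpos : forall y p, sin (y + 2 * IZR (Z.pos p) * PI) = sin y).
  { intros y p. now rewrite <- (positive_nat_Z p), <- INR_IZR_INZ, sin_period. }
  destruct k as [|p|p]; [f_equal; ring | apply Hpos |].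
  rewrite <- (Hpos (x + 2 * IZR (Z.neg p) * PI) p). f_equal.
  rewrite <- Pos2Z.opp_pos, opp_IZR. ring.
Qed.

Lemma isinpi_point_sound t : encloses (isinpi_point t) (sin (PI * (IZR t / scaleR))).
Proof.
  pose proof scaleR_pos. unfold isinpi_point.
  set (u := (t mod (2 * scale))%Z).
  assert (Et : PI * (IZR t / scaleR) = PI * (IZR u / scaleR) + 2 * IZR (t / (2 * scale)) * PI).
  { rewrite (Z_div_mod_eq_full t (2 * scale)) at 1. fold u.
    rewrite plus_IZR, !mult_IZR. fold scaleR. field. lra. }
  rewrite Et, sin_period_Z.
  destruct (scale <=? u)%Z; [|apply fold_half_sound].
  replace (PI * (IZR u / scaleR)) with (PI * (IZR (u - scale) / scaleR) + PI)
    by (rewrite minus_IZR; fold scaleR; field; lra).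
  rewrite neg_sin. apply ineg_sound, fold_half_sound.
Qed.

Lemma Rabs_sin_le z : Rabs (sin z) <= Rabs z.
Proof.
  assert (Hnonneg : forall z, 0 <= z -> Rabs (sin z) <= z).
  { clear z. intros z Hz. pose proof (SIN_bound z). pose proof PI_gt_3.
    destruct (Rle_or_lt 1 z); [apply Rabs_le; lra|].
    destruct (Req_dec z 0) as [->|Hn]; [rewrite sin_0, Rabs_R0; lra|].
    assert (sin z < z) by (apply sin_lt_x; lra).
    assert (0 <= sin z) by (apply sin_ge_0; lra).
    rewrite Rabs_right; lra. }
  destruct (Rle_or_lt 0 z).
  - rewrite (Rabs_right z) by lra. auto.
  - rewrite (Rabs_left z), <- Rabs_Ropp, <- sin_neg by lra.
    apply Hnonneg. lra.
Qed.

Lemma sin_lipschitz a b : Rabs (sin a - sin b) <= Rabs (a - b).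
Proof.
  rewrite form4, !Rabs_mult, (Rabs_right 2) by lra.
  assert (Hc : Rabs (cos ((a + b) / 2)) <= 1) by (apply Rabs_le, COS_bound).
  assert (Hs : Rabs (sin ((a - b) / 2)) <= Rabs (a - b) / 2).
  { eapply Rle_trans; [apply Rabs_sin_le|].
    unfold Rdiv. rewrite Rabs_mult, (Rabs_right (/ 2)) by lra. lra. }
  pose proof (Rabs_pos (cos ((a + b) / 2))). pose proof (Rabs_pos (sin ((a - b) / 2))).
  nra.
Qed.

Lemma PI_mul_le_div_up r : 0 <= IZR r -> PI * IZR r <= IZR (div_up (hi ipi * r) scale).
Proof.
  intro Hr. pose proof scaleR_pos. pose proof PI_gt_3. destruct ipi_sound as [_ Hpi].
  replace (PI * IZR r) with (PI * scaleR * IZR r / scaleR) by (field; lra).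
  assert (Hdiv := div_round_sound 0 (hi ipi * r) scale (PI * scaleR * IZR r)).
  rewrite mult_IZR in Hdiv. fold scaleR in Hdiv.
  apply Hdiv; [reflexivity|]. split; [|apply Rmult_le_compat_r; lra].
  apply Rmult_le_pos; [apply Rmult_le_pos|]; lra.
Qed.

Lemma isinpi_sound A x : encloses A x -> encloses (isinpi A) (sin (PI * x)).
Proof.
  intros [HA1 HA2]. pose proof scaleR_pos. pose proof PI_gt_3.
  unfold isinpi. cbv zeta.
  set (m := ((lo A + hi A) / 2)%Z). set (r := (hi A - m)%Z).
  assert (Hm : IZR m * 2 <= IZR (lo A) + IZR (hi A)).
  { rewrite <- plus_IZR, <- mult_IZR. apply IZR_le.
    rewrite Z.mul_comm. apply Z.mul_div_le. lia. }
  assert (Hr : Rabs (x * scaleR - IZR m) <= IZR r)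
    by (unfold r; rewrite minus_IZR; apply Rabs_le; lra).
  set (e := div_up (hi ipi * r) scale).
  assert (He : PI * IZR r <= IZR e)
    by (apply PI_mul_le_div_up; eapply Rle_trans; [apply Rabs_pos|exact Hr]).
  set (d := (sin (PI * x) - sin (PI * (IZR m / scaleR))) * scaleR).
  assert (Hd : Rabs d <= IZR e).
  { unfold d. rewrite Rabs_mult, (Rabs_right scaleR) by lra.
    eapply Rle_trans; [apply Rmult_le_compat_r; [lra | apply sin_lipschitz]|].
    replace (PI * x - PI * (IZR m / scaleR)) with (PI * (x * scaleR - IZR m) * / scaleR)
      by (field; lra).
    rewrite !Rabs_mult, Rabs_inv, (Rabs_right PI), (Rabs_right scaleR) by lra.
    replace (PI * Rabs (x * scaleR - IZR m) * / scaleR * scaleR)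
      with (PI * Rabs (x * scaleR - IZR m)) by (field; lra).
    nra. }
  pose proof (Rle_abs d). pose proof (Rle_abs (- d)). rewrite Rabs_Ropp in *.
  destruct (isinpi_point_sound m) as [P1 P2].
  unfold encloses; cbn [lo hi]. rewrite minus_IZR, plus_IZR. unfold d in *. lra.
Qed.

Lemma icospi_sound A x : encloses A x -> encloses (icospi A) (cos (PI * x)).
Proof.
  intro HA. rewrite cos_sin.
  replace (PI / 2 + PI * x) with (PI * (x + IZR 1 / IZR 2)) by (simpl; field).
  apply isinpi_sound, iadd_sound; [assumption | now apply icst_sound].
Qed.

(** * The left-hand side *)

(* The angles are measured in units of [PI]. *)
Definition a4b_lhs_itv (Al Be Ga De Ep : itv) : itv :=
  isub (imul (isub (imul (isub ione (icospi Be)) (isinpi (isub De (ihalf Al))))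
                   (imul (isub ione (icospi Ga)) (isinpi (isub Ep (ihalf Al)))))
             (isinpi (ihalf (isub De Ep))))
       (imul (imul (isub ione (icospi (isub Be Ga))) (isinpi (ihalf Al)))
             (isinpi (ihalf (iadd De Ep)))).

Lemma a4b_lhs_itv_sound Al Be Ga De Ep al be ga de ep :
  encloses Al al -> encloses Be be -> encloses Ga ga -> encloses De de -> encloses Ep ep ->
  encloses (a4b_lhs_itv Al Be Ga De Ep)
    (a4b_lhs (PI * al) (PI * be) (PI * ga) (PI * de) (PI * ep)).
Proof.
  intros. unfold a4b_lhs, a4b_lhs_itv.
  replace (PI * de - PI * al / 2) with (PI * (de - al / 2)) by field.
  replace (PI * ep - PI * al / 2) with (PI * (ep - al / 2)) by field.
  replace ((PI * de - PI * ep) / 2) with (PI * ((de - ep) / 2)) by field.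
  replace (PI * be - PI * ga) with (PI * (be - ga)) by field.
  replace (PI * al / 2) with (PI * (al / 2)) by field.
  replace ((PI * de + PI * ep) / 2) with (PI * ((de + ep) / 2)) by field.
  repeat match goal with
  | |- encloses (isub _ _) _ => apply isub_sound
  | |- encloses (iadd _ _) _ => apply iadd_sound
  | |- encloses (imul _ _) _ => apply imul_sound
  | |- encloses (ihalf _) _ => apply ihalf_sound
  | |- encloses (isinpi _) _ => apply isinpi_sound
  | |- encloses (icospi _) _ => apply icospi_sound
  | |- encloses ione _ => apply ione_sound
  end; assumption.
Qed.

(* [delta = a PI] and [4 PI / f = b PI]. *)
Definition forced_lhs (a b : R) : R :=
  a4b_lhs (PI * (2 - 2 * a)) (PI * (2 - 2 * a)) (PI * (2 / 5)) (PI * a)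
          (PI * (3 * a - 7 / 5 + b)).

Definition forced_lhs_itv (A B : itv) : itv :=
  let Al := isub (icst 2 1) (imul (icst 2 1) A) in
  a4b_lhs_itv Al Al (icst 2 5) A (iadd (isub (imul (icst 3 1) A) (icst 7 5)) B).

Lemma forced_lhs_itv_sound A B a b :
  encloses A a -> encloses B b -> encloses (forced_lhs_itv A B) (forced_lhs a b).
Proof.
  intros HA HB.
  assert (Hal : encloses (isub (icst 2 1) (imul (icst 2 1) A)) (2 - 2 * a)).
  { replace (2 - 2 * a) with (IZR 2 / IZR 1 - IZR 2 / IZR 1 * a) by (simpl; field).
    apply isub_sound, imul_sound; auto; apply icst_sound; lia. }
  unfold forced_lhs, forced_lhs_itv; cbv zeta.
  apply a4b_lhs_itv_sound; try exact Hal; try exact HA.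
  - now apply icst_sound.
  - replace (3 * a - 7 / 5 + b) with (IZR 3 / IZR 1 * a - IZR 7 / IZR 5 + b) by (simpl; field).
    apply iadd_sound; [apply isub_sound|exact HB].
    + apply imul_sound; [apply icst_sound; lia | exact HA].
    + apply icst_sound; lia.
Qed.

(** * Branch and bound *)

Definition bisect_at (A : itv) : Z := ((lo A + hi A) / 2)%Z.

Lemma encloses_bisect A x :
  encloses A x -> encloses (Itv (lo A) (bisect_at A)) x \/ encloses (Itv (bisect_at A) (hi A)) x.
Proof.
  intros [H1 H2]. unfold encloses; cbn [lo hi].
  destruct (Rle_or_lt (x * scaleR) (IZR (bisect_at A))); [left | right]; lra.
Qed.

Section Bisection.

Variable P : R -> R -> Prop.
Variable test : itv -> itv -> bool.
Hypothesis test_sound : forall A B a b,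
  test A B = true -> encloses A a -> encloses B b -> P a b.

(* [if] rather than [||]: the recursive calls must not be evaluated when [test] succeeds. *)
Fixpoint bisect (n : nat) (A B : itv) : bool :=
  if test A B then true else
  match n with
  | O => false
  | S n =>
    if (hi B - lo B <=? hi A - lo A)%Z
    then bisect n (Itv (lo A) (bisect_at A)) B && bisect n (Itv (bisect_at A) (hi A)) B
    else bisect n A (Itv (lo B) (bisect_at B)) && bisect n A (Itv (bisect_at B) (hi B))
  end.

Lemma bisect_sound n A B a b :
  bisect n A B = true -> encloses A a -> encloses B b -> P a b.
Proof.
  revert A B. induction n as [|n IH]; intros A B Hb HA HB; simpl in Hb;
    destruct (test A B) eqn:Ht; try discriminate; [now apply (test_sound A B) ..|].
  destruct (hi B - lo B <=? hi A - lo A)%Z; apply andb_true_iff in Hb as [H1 H2].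
  - destruct (encloses_bisect A a HA); [apply (IH _ B H1) | apply (IH _ B H2)]; assumption.
  - destruct (encloses_bisect B b HB); [apply (IH A _ H1) | apply (IH A _ H2)]; assumption.
Qed.

End Bisection.

(* A box is discarded when it lies in [45 a + 15 b < 21], i.e. [a < 7/15 - b/3]. *)
Definition forced_test (A B : itv) : bool :=
  if (45 * hi A + 15 * hi B <? 21 * scale)%Z then true
  else (hi (forced_lhs_itv A B) <? 0)%Z.

Lemma forced_test_sound A B a b : forced_test A B = true -> encloses A a -> encloses B b ->
  7 / 15 - b / 3 < a -> forced_lhs a b < 0.
Proof.
  intros Ht [HA1 HA2] [HB1 HB2] Hab. pose proof scaleR_pos.
  unfold forced_test in Ht.
  destruct (45 * hi A + 15 * hi B <? 21 * scale)%Z eqn:Hout.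
  - exfalso. apply Z.ltb_lt, IZR_lt in Hout.
    rewrite plus_IZR, !mult_IZR in Hout. fold scaleR in Hout. nra.
  - apply Z.ltb_lt, IZR_lt in Ht.
    destruct (forced_lhs_itv_sound A B a b (conj HA1 HA2) (conj HB1 HB2)) as [_ Hf].
    nra.
Qed.

Lemma forced_lhs_neg a b : 16 / 45 <= a <= 1 -> 0 <= b <= 1 / 3 ->
  7 / 15 - b / 3 < a -> forced_lhs a b < 0.
Proof.
  intros Ha Hb. pose proof scaleR_pos.
  apply (bisect_sound _ forced_test forced_test_sound 16
           (Itv (lo (icst 16 45)) scale) (Itv 0 (hi (icst 1 3)))).
  - vm_compute. reflexivity.
  - destruct (icst_sound 16 45 ltac:(lia)) as [L _].
    unfold encloses; cbn [lo hi]. fold scaleR. split; [|nra].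
    eapply Rle_trans; [exact L|]. apply Rmult_le_compat_r; lra.
  - destruct (icst_sound 1 3 ltac:(lia)) as [_ U].
    unfold encloses; cbn [lo hi]. split; [nra|].
    eapply Rle_trans; [|exact U]. apply Rmult_le_compat_r; lra.
Qed.

Theorem mainTheorem5 :
  ~ (exists (f : nat) (q : Q),
       Nat.Even f /\ (12 <= f)%nat /\
       let delta := Q2R q * PI in
       let alpha := 2 * PI - 2 * delta in
       let beta := 2 * PI - 2 * delta in
       let gamma := 2 * PI / 5 in
       let epsilon := 3 * delta - 7 * PI / 5 + 4 * PI / INR f in
       7 * PI / 15 - 4 * PI / (3 * INR f) < delta < PI /\
       a4b_lhs alpha beta gamma delta epsilon = 0).
Proof.
  intros [f [q [_ [Hf H]]]]. cbv zeta in H. destruct H as [[Hlo Hhi] Heq].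
  pose proof PI_gt_3.
  assert (Hf12 : 12 <= INR f) by (apply (le_INR 12) in Hf; simpl in Hf; lra).
  set (a := Q2R q) in *. set (b := 4 / INR f).
  assert (Hb : 0 <= b <= 1 / 3).
  { unfold b. split; [apply Rle_mult_inv_pos; lra|].
    apply Rmult_le_reg_r with (INR f); [lra|]. field_simplify; lra. }
  assert (Hab : 7 / 15 - b / 3 < a).
  { apply Rmult_lt_reg_r with PI; [lra|].
    replace ((7 / 15 - b / 3) * PI) with (7 * PI / 15 - 4 * PI / (3 * INR f))
      by (unfold b; field; lra).
    assumption. }
  assert (Ha : a < 1) by (apply Rmult_lt_reg_r with PI; lra).
  assert (E : a4b_lhs (2 * PI - 2 * (a * PI)) (2 * PI - 2 * (a * PI)) (2 * PI / 5) (a * PI)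
                (3 * (a * PI) - 7 * PI / 5 + 4 * PI / INR f) = forced_lhs a b)
    by (unfold forced_lhs, b; f_equal; field; lra).
  pose proof (forced_lhs_neg a b ltac:(lra) Hb Hab). lra.
Qed.
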